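(* Let $m,\delta$ be positive integers, let $X=\{x_1,\dots,x_m\}$ be a set of numbers with $x_1>x_2>\dots>x_m\ge 0$, and let $\alpha=(\alpha_1,\dots,\alpha_\ell)$ be a $\delta$-deviation set of size $m$. Put $c_0=0$ and $c_j=\sum_{1\le i\le j}\alpha_i$ for $j\ge 1$, and $$\Delta(X,\alpha)=\Big|\sum_{j=0}^{\ell-1}(-1)^j\sum_{c_j<i\le c_{j+1}}x_i\Big|.$$ Then $\Delta(X,\alpha)\le \delta\cdot x_1$.
   Context: For positive integers $m$ and $\delta$, a $\delta$-deviation set of size $m$ is a finite sequence $(\alpha_1,\alpha_2,\dots,\alpha_\ell)$ of positive integers such that (i) $\sum_i\alpha_i=m$; (ii) $\big|\sum_i\alpha_{2i-1}-\sum_i\alpha_{2i}\big|\le 1$; (iii) $\big|\sum_{1\le i\le j}(-1)^{i-1}\alpha_i\big|\le\delta$ for every $j\ge 1$. *)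

From mathcomp Require Import all_boot all_order all_algebra.
Set Implicit Arguments. Unset Strict Implicit. Unset Printing Implicit Defensive.
Import Order.TTheory GRing.Theory Num.Theory.
Local Open Scope ring_scope.

(* A sequence a = [:: a_1; ...; a_l] is stored 0-indexed: a`_k = alpha_(k+1). *)

(* sum_{1 <= i <= j} (-1)^(i-1) alpha_i   (alpha_i := 0 for i > l) *)
Definition alt_prefix (a : seq nat) (j : nat) : int :=
  \sum_(0 <= k < minn j (size a)) (-1) ^+ k * (nth 0%N a k)%:Z.

(* sum_i alpha_(2i-1)  (odd positions, 1-indexed) *)
Definition odd_pos_sum (a : seq nat) : int :=
  \sum_(0 <= k < size a | ~~ odd k) (nth 0%N a k)%:Z.
(* sum_i alpha_(2i)  (even positions, 1-indexed) *)
Definition even_pos_sum (a : seq nat) : int :=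
  \sum_(0 <= k < size a | odd k) (nth 0%N a k)%:Z.

Definition deviation_set (m delta : nat) (a : seq nat) : Prop :=
  [/\ all (fun t => 0 < t)%N a,
      sumn a = m,
      `|odd_pos_sum a - even_pos_sum a| <= 1
    & forall j : nat, (1 <= j)%N -> `|alt_prefix a j| <= delta%:Z].

Definition cpart (a : seq nat) (j : nat) : nat := sumn (take j a).

Definition Delta (R : numDomainType) (x : nat -> R) (a : seq nat) : R :=
  `| \sum_(0 <= j < size a)
        (-1) ^+ j * \sum_((cpart a j).+1 <= i < (cpart a j.+1).+1) x i |.

(* Abel summation.  Read Delta as |sum_i e_i x_i| with e_i = (-1)^j on the j-th block; its
   partial sums run linearly between consecutive alternating prefix sums of alpha, hence stay in
   [-delta, delta], while the weights x_i - x_(i+1) (with x_(m+1) := 0) are nonnegative and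
   telescope to x_1. *)

From mathcomp Require Import all_boot all_order all_algebra.
From mathcomp Require Import ring lra zify.
Set Implicit Arguments. Unset Strict Implicit. Unset Printing Implicit Defensive.
Import Order.TTheory GRing.Theory Num.Theory.
Local Open Scope ring_scope.

Section AbelBlocks.
Variable R : realDomainType.
Implicit Types (x : nat -> R) (p s D : R).

Lemma norm_le_affine_nat p s D (n k : nat) : (k <= n)%N ->
  `|p| <= D -> `|p + s * n%:R| <= D -> `|p + s * k%:R| <= D.
Proof.
move=> le_kn; rewrite !ler_norml => /andP[? ?] /andP[? ?].
have [k_ge0 le_kn'] : 0 <= k%:R :> R /\ k%:R <= n%:R :> R by rewrite ler_nat.
have [s_ge0|s_le0] := lerP 0 s.
- have ? : 0 <= s * k%:R by apply: mulr_ge0.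
  have ? : s * k%:R <= s * n%:R by apply: ler_wpM2l.
  by apply/andP; split; lra.
- have ? : s * k%:R <= 0 by rewrite mulr_le0_ge0 // ltW.
  have ? : s * n%:R <= s * k%:R := ler_wnM2l (ltW s_le0) le_kn'.
  by apply/andP; split; lra.
Qed.

Lemma abel_block x p s D (c n : nat) :
  (forall k, (k <= n)%N -> `|p + s * k%:R| <= D) ->
  (forall i, (c < i <= c + n)%N -> x i.+1 <= x i) ->
  `|p * x c.+1 + s * \sum_(c.+1 <= i < (c + n).+1) x i - (p + s * n%:R) * x (c + n).+1|
    <= D * (x c.+1 - x (c + n).+1).
Proof.
elim: n p c => [|n IHn] p c bounded decr.
  by rewrite addn0 big_geq // !(mulr0, addr0, subrr) normr0.
rewrite big_ltn; last by lia.
have x_c12 : 0 <= x c.+1 - x c.+2 by rewrite subr_ge0; apply: decr; lia.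
have ps_le : `|p + s| <= D by have := bounded 1%N; rewrite mulr1; apply.
have IH := IHn (p + s) c.+1; rewrite addSnnS in IH.
set S := \sum_(_ <= i < _) x i in IH *.
set z := x (c + n.+1).+1 in IH *.
have -> : p * x c.+1 + s * (x c.+1 + S) - (p + s * n.+1%:R) * z
    = (p + s) * (x c.+1 - x c.+2) + ((p + s) * x c.+2 + s * S - (p + s + s * n%:R) * z).
  by rewrite -natr1; ring.
have -> : D * (x c.+1 - z) = D * (x c.+1 - x c.+2) + D * (x c.+2 - z) by ring.
apply: le_trans (ler_normD _ _) (lerD _ _).
  by rewrite normrM (ger0_norm x_c12) ler_wpM2r.
apply: IH => [k le_kn|i /andP[lt_ci le_in]]; last by apply: decr; lia.
have := bounded k.+1; rewrite -natr1 mulrDr mulr1 addrAC -addrA; apply; lia.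
Qed.

Definition alt_block_sum x (a : seq nat) (c : nat) : R :=
  \sum_(0 <= j < size a)
     (-1) ^+ j * \sum_((c + cpart a j).+1 <= i < (c + cpart a j.+1).+1) x i.

Lemma alt_block_sum_cons x (n : nat) a c :
  alt_block_sum x (n :: a) c
    = \sum_(c.+1 <= i < (c + n).+1) x i - alt_block_sum x a (c + n).
Proof.
have cpart0 b : cpart b 0 = 0%N by rewrite /cpart take0.
have cpartS j : cpart (n :: a) j.+1 = (n + cpart a j)%N := erefl.
rewrite /alt_block_sum big_nat_recl // -/(size a) expr0 mul1r -sumrN.
rewrite cpartS !cpart0 !addn0; congr (_ + _); apply: eq_bigr => j _.
by rewrite !cpartS !addnA exprS mulN1r mulNr.
Qed.

End AbelBlocks.

Lemma alt_prefix0 (a : seq nat) : alt_prefix a 0 = 0.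
Proof. by rewrite /alt_prefix min0n big_geq. Qed.

Lemma alt_prefix_cons (n : nat) a j : alt_prefix (n :: a) j.+1 = n%:Z - alt_prefix a j.
Proof.
rewrite /alt_prefix /= minnSS big_nat_recl // expr0 mul1r -sumrN.
by congr (_ + _); apply: eq_bigr => k _; rewrite exprS mulN1r mulNr.
Qed.

Lemma cpart_le_sumn (a : seq nat) j : (cpart a j <= sumn a)%N.
Proof. by rewrite -{2}(cat_take_drop j a) sumn_cat leq_addr. Qed.

(* Generalised for the induction over blocks: p is the partial sum of the signs before
   position c+1 and s the sign of the block starting there. *)
Lemma alt_block_sum_abel (R : realDomainType) (x : nat -> R) (D : R) a : forall c p s,
  (forall j, `|p + s * (alt_prefix a j)%:~R| <= D) ->
  (forall i, (c < i <= c + sumn a)%N -> x i.+1 <= x i) ->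
  0 <= x (c + sumn a).+1 ->
  `|p * x c.+1 + s * alt_block_sum x a c| <= D * x c.+1.
Proof.
elim: a => [|n a IHa] c p s bounded /= decr x_end_ge0;
  have p_le : `|p| <= D by have := bounded 0%N; rewrite alt_prefix0 mulr0 addr0.
  rewrite /alt_block_sum big_geq // mulr0 addr0 normrM.
  by move: x_end_ge0; rewrite addn0 => x_ge0; rewrite (ger0_norm x_ge0) ler_wpM2r.
have pn_le : `|p + s * n%:R| <= D.
  by have := bounded 1%N; rewrite alt_prefix_cons alt_prefix0 subr0.
have block := abel_block (fun k le_kn => norm_le_affine_nat le_kn p_le pn_le)
  (fun i (h : (c < i <= c + n)%N) => decr i ltac:(lia)).
set S := \sum_(_ <= i < _) x i in block *.
set z := x (c + n).+1 in block *.
rewrite alt_block_sum_cons.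
have -> : p * x c.+1 + s * (S - alt_block_sum x a (c + n))
    = (p * x c.+1 + s * S - (p + s * n%:R) * z)
      + ((p + s * n%:R) * z + - s * alt_block_sum x a (c + n)) by ring.
have -> : D * x c.+1 = D * (x c.+1 - z) + D * z by ring.
apply: le_trans (ler_normD _ _) (lerD block _).
apply: IHa; rewrite -?addnA //; last by move=> i h; apply: decr; lia.
move=> j; have := bounded j.+1; rewrite alt_prefix_cons intrB.
by congr (_ <= _); congr `|_|; ring.
Qed.

Theorem lemma1 (R : realFieldType) (m delta : nat) (x : nat -> R) (a : seq nat) :
  (0 < m)%N -> (0 < delta)%N ->
  (forall i : nat, (1 <= i)%N -> (i < m)%N -> x i.+1 < x i) ->
  0 <= x m ->
  deviation_set m delta a ->
  Delta x a <= delta%:R * x 1%N.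
Proof.
move=> m_gt0 _ x_decr x_m_ge0 [_ sum_a _ prefix_le].
pose y i := if (i <= m)%N then x i else 0.
have -> : Delta x a = `|alt_block_sum y a 0|.
  congr `|_|; apply: eq_bigr => j _; congr (_ * _).
  apply: eq_big_nat => i /andP[_ le_i]; rewrite /y ifT //.
  by have := cpart_le_sumn a j.+1; rewrite sum_a; lia.
have -> : x 1%N = y 1%N by rewrite /y ifT.
rewrite -[alt_block_sum _ _ _]mul1r -[X in `|X|]add0r -(mul0r (y 1%N)).
apply: alt_block_sum_abel; rewrite ?add0n ?sum_a /y ?ltnn //.
- move=> j; rewrite add0r mul1r; case: j => [|j]; first by rewrite alt_prefix0 normr0.
  by rewrite -intr_norm -[_%:R]/((delta%:Z)%:~R) ler_int prefix_le.
- move=> i /andP[i_gt0 le_im]; rewrite le_im.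
  have [lt_im|->] : (i < m \/ i = m)%N by lia.
    by rewrite lt_im; apply/ltW/x_decr.
  by rewrite ltnn.
Qed.
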